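(* Fix integers $2\le d\le n$ and $m\ge1$, and let $\lambda=\log n+m\log(1-d/n)$. Then \[ \mathbb{P}(H^*_{nmd}\text{ is disconnected})\ \le\ e^{\lambda}+\sum_{r=1}^\infty e^{(\lambda+5)r}+(2/e)^n. \]
   Context: $H^*_{nmd}$ is the random hypergraph on node set $\{1,\dots,n\}$ whose hyperedge set is $\{V_1,\dots,V_m\}$, with $V_1,\dots,V_m$ mutually independent uniformly random $d$-element subsets of $\{1,\dots,n\}$. A hypergraph on node set $V$ is connected if for every partition of $V$ into nonempty sets $V_1',V_2'$ some hyperedge meets both; otherwise disconnected. Conventions $\log0=-\infty$, $e^{-\infty}=0$; the series may equal $+\infty$. *)

From HB Require Import structures.
From mathcomp Require Import all_boot all_order all_algebra.
From mathcomp Require Import all_classical all_reals all_analysis.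
Set Implicit Arguments. Unset Strict Implicit. Unset Printing Implicit Defensive.
Import Order.TTheory GRing.Theory Num.Theory.

(* A hypergraph on node set 'I_n with m (labelled, possibly repeated)
   hyperedges, given as a finite function 'I_m -> {set 'I_n}. *)

Definition meets_both (n m : nat) (E : {ffun 'I_m -> {set 'I_n}})
  (V1 V2 : {set 'I_n}) : bool :=
  [exists i, (E i :&: V1 != finset.set0) && (E i :&: V2 != finset.set0)].

Definition hconnected (n m : nat) (E : {ffun 'I_m -> {set 'I_n}}) : bool :=
  [forall V1 : {set 'I_n},
     ((V1 != finset.set0) && (~: V1 != finset.set0)) ==> meets_both E V1 (~: V1)].

(* sample space of H*_{nmd}: m-tuples of d-element subsets of {1..n};
   the uniform distribution on it is the law of m mutually independent
   uniformly random d-subsets. *)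
Definition hsample (n m d : nat) : {set {ffun 'I_m -> {set 'I_n}}} :=
  [set E : {ffun 'I_m -> {set 'I_n}} | [forall i, #|E i| == d]].

Definition prob_disconnected (R : realType) (n m d : nat) : R :=
  (#|[set E in hsample n m d | ~~ hconnected E]|%:R
     / #|hsample n m d|%:R)%R.

(* lambda = log n + m log(1 - d/n), in the extended reals,
   with log 0 = -oo (lne) *)
Definition hlambda (R : realType) (n m d : nat) : \bar R :=
  (lne (n%:R : R)%:E + (m%:R : R)%:E * lne (1 - d%:R / n%:R : R)%:E)%E.

From HB Require Import structures.
From mathcomp Require Import all_boot all_order all_algebra.
From mathcomp Require Import all_classical all_reals all_analysis.
From mathcomp Require Import zify ring lra.
Import Order.TTheory GRing.Theory Num.Theory.

(* If H*_{nmd} is disconnected, some split of the nodes into V of size s, 0 < s < n, and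
   its complement is crossed by no hyperedge; for a fixed V this has probability p_s^m,
   p_s = (C(s,d) + C(n-s,d)) / C(n,d), so a union bound gives
   P <= sum_{0<s<n} C(n,s) p_s^m, and by symmetry we may take s = k <= n/2.
   The key estimate is p_k^(n+4k) <= q^(kn) with q = 1 - d/n: the main part
   C(n-k,d)/C(n,d) is at most q^k, and the small part C(k,d) costs a factor
   exp(4k^2/n^2) when d >= 3, while d = 2 is computed exactly.  It forces either
   p_k^m <= e^{-n}, which contributes at most 2^n e^{-n} in total, or
   C(n,k) p_k^m <= n^k e^{4k} q^{km} <= (e^5 n q^m)^k / 2 = e^{(lambda+5)k} / 2. *)

Lemma leq_expn2r m n e : m <= n -> m ^ e <= n ^ e.
Proof. by case: e => // e mn; rewrite leq_exp2r. Qed.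

Lemma leq_ffact_cross a b d : a <= b -> a ^_ d * b ^ d <= b ^_ d * a ^ d.
Proof.
move=> ab; elim: d => [|d IH]; first by rewrite !ffactn0 !expn0.
rewrite !ffactnSr !expnS.
have step : (a - d) * b <= (b - d) * a by nia.
nia.
Qed.

Lemma leq_bin_cross a b d : a <= b -> 'C(a, d) * b ^ d <= 'C(b, d) * a ^ d.
Proof.
move=> ab; rewrite -(@leq_pmul2r d`!) ?fact_gt0 //.
by rewrite mulnAC bin_ffact [X in _ <= X]mulnAC bin_ffact leq_ffact_cross.
Qed.

Lemma ffactnD n k d : n ^_ (k + d) = n ^_ k * (n - k) ^_ d.
Proof.
elim: d => [|d IH]; first by rewrite addn0 ffactn0 muln1.
by rewrite addnS !ffactnSr IH subnDA mulnA.
Qed.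

Lemma bin_subn_swap n k d : 'C(n, k) * 'C(n - k, d) = 'C(n, d) * 'C(n - d, k).
Proof.
apply/eqP; rewrite -(@eqn_pmul2r (k`! * d`!)) ?muln_gt0 ?fact_gt0 //; apply/eqP.
by rewrite [LHS]mulnACA [k`! * _]mulnC [RHS]mulnACA !bin_ffact -!ffactnD addnC.
Qed.

Lemma leq_bin_subn_expn n k d : k <= n ->
  'C(n - k, d) * n ^ k <= 'C(n, d) * (n - d) ^ k.
Proof.
move=> kn; rewrite -(@leq_pmul2l 'C(n, k)) ?bin_gt0 // mulnA bin_subn_swap.
have := @leq_bin_cross _ _ k (leq_subr d n); nia.
Qed.

Lemma leq_bin_small_side n k d : 2 <= d -> 2 * k <= n ->
  'C(k, d) * n ^ 2 <= 4 * k ^ 2 * 'C(n - k, d).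
Proof.
move=> d2 kn; have [->|k0] := posnP k; first by rewrite bin0n; case: d d2.
have kk : k <= n - k by lia.
rewrite -(@leq_pmul2r ((n - k) ^ d)) ?expn_gt0 ?subn_gt0; last by lia.
apply: (@leq_trans ('C(n - k, d) * k ^ d * n ^ 2)).
  by rewrite mulnAC leq_mul2r leq_bin_cross ?orbT.
have pow_le : k ^ (d - 2) <= (n - k) ^ (d - 2) by apply: leq_expn2r.
have sq_le : n ^ 2 <= 4 * (n - k) ^ 2 by rewrite !expnS !expn0; nia.
rewrite -(subnK d2) !expnD; set C := 'C(_, _).
rewrite [leqRHS](_ : _ = C * k ^ 2 * ((n - k) ^ (d - 2) * (4 * (n - k) ^ 2))); last by ring.
rewrite [leqLHS](_ : _ = C * k ^ 2 * (k ^ (d - 2) * n ^ 2)); last by ring.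
by rewrite leq_mul // leq_mul.
Qed.

Lemma bin2_mul2 n : 'C(n, 2) * 2 = n * (n - 1).
Proof. by rewrite (bin_ffact n 2) ffactnSr ffactn1. Qed.

Lemma bin2_split n k : k <= n -> 'C(n - k, 2) + 'C(k, 2) + k * (n - k) = 'C(n, 2).
Proof.
move=> kn; apply/eqP; rewrite -(@eqn_pmul2r 2) //; apply/eqP.
rewrite !mulnDl !bin2_mul2; nia.
Qed.

Lemma leq_ffact_expn n k : n ^_ k <= n ^ k.
Proof.
elim: k => [|k IH]; first by rewrite ffactn0 expn0.
by rewrite ffactnSr expnSr leq_mul // leq_subr.
Qed.

Lemma leq_bin_expn n k : 'C(n, k) <= n ^ k.
Proof. by rewrite (leq_trans _ (leq_ffact_expn n k)) // -bin_ffact leq_pmulr ?fact_gt0. Qed.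

(* With n = 2k + r the inequality becomes a polynomial one with nonnegative
   coefficients in k - 2 and r. *)
Lemma crossing_pairs_ineq n k : 2 <= k -> 2 * k <= n ->
  k * n * (n * (n - 1)) <= (n + 4 * k) * (n - 2) * (k * (n - k)).
Proof.
move=> k2 kn.
have [r ->] : exists r, n = 2 * k + r by exists (n - 2 * k); lia.
have [j ->] : exists j, k = j + 2 by exists (k - 2); lia.
have -> : 2 * (j + 2) + r - (j + 2) = j + 2 + r by lia.
have -> : 2 * (j + 2) + r - 1 = 2 * j + 3 + r by lia.
have -> : 2 * (j + 2) + r - 2 = 2 * j + 2 + r by lia.
nia.
Qed.

Lemma card_ffun_in (aT T : finType) (S : {set T}) :
  #|[set f : {ffun aT -> T} | [forall i, f i \in S]]| = #|S| ^ #|aT|.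
Proof.
rewrite -card_ffun_on; apply: eq_card => f; rewrite inE.
by apply/forallP/ffun_onP.
Qed.

Lemma card_hsample n m d : #|hsample n m d| = 'C(n, d) ^ m.
Proof.
rewrite -[n in 'C(n, _)]card_ord -card_draws -[m in _ ^ m]card_ord -card_ffun_in.
by apply: eq_card => E; rewrite !inE; apply: eq_forallb => i; rewrite inE.
Qed.

Definition uncrossed n m d (V : {set 'I_n}) : {set {ffun 'I_m -> {set 'I_n}}} :=
  [set E in hsample n m d | [forall i, (E i \subset V) || (E i \subset ~: V)]].

Lemma card_uncrossed n m d V :
  #|uncrossed n m d V| <= ('C(#|V|, d) + 'C(n - #|V|, d)) ^ m.
Proof.
set inV := [set A : {set 'I_n} | A \subset V & #|A| == d].
set inVc := [set A : {set 'I_n} | A \subset ~: V & #|A| == d].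
apply: (@leq_trans #|[set E : {ffun 'I_m -> {set 'I_n}} | [forall i, E i \in inV :|: inVc]]|).
  apply: subset_leq_card; apply/fintype.subsetP => E.
  rewrite !inE => /andP[/forallP sizeE /forallP sideE].
  apply/forallP => i; rewrite !inE (eqP (sizeE i)) eqxx !andbT.
  by case/orP: (sideE i) => ->; rewrite ?orbT.
rewrite card_ffun_in card_ord leq_expn2r // (leq_trans (leq_card_setU _ _)) //.
by rewrite !cards_draws (cardsCs (~: V)) finset.setCK card_ord.
Qed.

Lemma disconnected_sub_uncrossed n m d :
  [set E in hsample n m d | ~~ hconnected E]
    \subset \bigcup_(V : {set 'I_n} | 0 < #|V| < n) uncrossed n m d V.
Proof.
apply/fintype.subsetP => E; rewrite inE => /andP[sampleE].
rewrite /hconnected negb_forall => /existsP[V]; rewrite negb_imply.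
case/andP=> /andP[V0 Vc0] /existsPn notmeets.
apply/bigcupP; exists V.
  by have := cardsC V; rewrite card_ord -!card_gt0 in V0 Vc0 *; lia.
rewrite inE sampleE; apply/forallP => i; move: (notmeets i).
rewrite negb_and !negbK !finset.setI_eq0 !finset.disjoints_subset finset.setCK.
by case/orP=> ->; rewrite ?orbT.
Qed.

Lemma card_disconnected_le n m d :
  #|[set E in hsample n m d | ~~ hconnected E]|
    <= \sum_(V : {set 'I_n} | 0 < #|V| < n) #|uncrossed n m d V|.
Proof.
apply: leq_trans (subset_leq_card (disconnected_sub_uncrossed n m d)) _.
elim/big_ind2: _ => [|U u W w Uu Ww|//]; first by rewrite cards0.
by rewrite (leq_trans (leq_card_setU _ _)) ?leq_add.
Qed.

Local Open Scope ring_scope.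

Lemma sum_set_by_card (R : pzSemiRingType) (T : finType) (P : pred nat) (F : nat -> R) :
  \sum_(A : {set T} | P #|A|) F #|A| = \sum_(s < #|T|.+1 | P s) 'C(#|T|, s)%:R * F s.
Proof.
have card_lt (A : {set T}) : (#|A| < #|T|.+1)%N by rewrite ltnS max_card.
rewrite (partition_big (fun A : {set T} => Ordinal (card_lt A)) (fun s => P s)) //.
apply: eq_bigr => s Ps; rewrite -card_draws mulr_natl -sumr_const.
apply: eq_big => [A|A /andP[_ /eqP <-]] //.
by rewrite inE -val_eqE /=; case: eqP => [->|]; rewrite ?Ps ?andbF.
Qed.

Lemma pow_le_dichotomy (R : realType) (a b : nat) (P w : R) :
  (0 < a + b)%N -> 0 <= P -> 0 <= w -> P ^+ (a + b) <= w ^+ a ->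
  P <= expR (- a%:R) \/ P <= w * expR b%:R.
Proof.
move=> ab0 P0 w0 Pw.
have [w_small|w_large] := lerP w (expR (- (a + b)%:R)).
  left; rewrite -(ler_pXn2r ab0) ?nnegrE ?expR_ge0 //.
  apply: (le_trans Pw); apply: (le_trans (lerXn2r _ _ _ w_small)).
  - by rewrite nnegrE.
  - by rewrite nnegrE expR_ge0.
  by rewrite -!expRM_natl ler_expR !mulrN mulrC.
right; rewrite -(ler_pXn2r ab0) ?nnegrE ?mulr_ge0 ?expR_ge0 //; apply: (le_trans Pw).
have one_le : 1 <= (w * expR (a + b)%:R) ^+ b.
  by apply: exprn_ege1; rewrite -ler_pdivrMr ?expR_gt0 // mul1r -expRN ltW.
have swap : expR b%:R ^+ (a + b) = expR (a + b)%:R ^+ b :> R.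
  by rewrite -!expRM_natl mulrC.
by rewrite exprMn exprD swap -mulrA -exprMn ler_peMr ?exprn_ge0.
Qed.

Lemma union_term_le_of_pow (R : realType) (n k : nat) (P u : R) :
  (0 < k)%N -> 0 <= P -> 0 <= u -> P ^+ (n + 4 * k) <= (u ^+ k) ^+ n ->
  'C(n, k)%:R * P <= (expR 5 * n%:R * u) ^+ k / 2 + 'C(n, k)%:R * expR (- n%:R).
Proof.
move=> k0 P0 u0 Pu.
have [P_small|P_large] : P <= expR (- n%:R) \/ P <= u ^+ k * expR (4 * k)%:R.
  by apply: pow_le_dichotomy; rewrite ?exprn_ge0 //; lia.
  by rewrite -[leLHS]add0r lerD ?ler_wpM2l ?divr_ge0 ?exprn_ge0 ?mulr_ge0 ?expR_ge0.
rewrite -[leLHS]addr0 lerD ?mulr_ge0 ?expR_ge0 //.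
have bin_le : 'C(n, k)%:R <= n%:R ^+ k :> R by rewrite -natrX ler_nat leq_bin_expn.
have two_le : 2 <= expR k%:R :> R.
  by apply: le_trans (expR_ge1Dx _); rewrite -[2]/(1 + 1) lerD2l ler1n.
have -> : (expR 5 * n%:R * u) ^+ k = n%:R ^+ k * (u ^+ k * expR (4 * k)%:R) * expR k%:R :> R.
  have e5 : expR 5 ^+ k = expR (4 * k)%:R * expR k%:R :> R.
    by rewrite -expRM_natl -expRD natrM; congr expR; ring.
  by rewrite !exprMn e5; ring.
by rewrite ler_pdivlMr // ler_pM ?mulr_ge0 // ler_pM.
Qed.

(* p_s: the probability that a uniform d-subset of an n-set lies on one side of a
   fixed split into parts of sizes s and n - s. *)
Definition psplit (R : numFieldType) (n d s : nat) : R :=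
  ('C(s, d) + 'C(n - s, d))%:R / 'C(n, d)%:R.

Section SplitProbability.
Variables (R : realType) (n d k : nat).
Hypotheses (dn : (d <= n)%N) (k0 : (0 < k)%N) (kn : (2 * k <= n)%N).

Let q : R := (n - d)%:R / n%:R.

Let k_le_n : (k <= n)%N. Proof. by lia. Qed.
Let n_gt0 : 0 < n%:R :> R. Proof. by rewrite ltr0n; lia. Qed.
Let c_gt0 : 0 < 'C(n, d)%:R :> R. Proof. by rewrite ltr0n bin_gt0. Qed.
Let q_ge0 : 0 <= q. Proof. by rewrite divr_ge0. Qed.

Lemma bin_subn_ratio_le : 'C(n - k, d)%:R / 'C(n, d)%:R <= q ^+ k.
Proof.
rewrite /q expr_div_n ler_pdivrMr // mulrAC ler_pdivlMr ?exprn_gt0 //.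
by rewrite -!natrX -!natrM ler_nat [leqRHS]mulnC leq_bin_subn_expn.
Qed.

Lemma psplit_pow_le_dge3 : (3 <= d)%N ->
  psplit R n d k ^+ (n + 4 * k) <= q ^+ (k * n).
Proof.
move=> d3; set y : R := 4 * k%:R ^+ 2 / n%:R ^+ 2.
have y0 : 0 <= y by rewrite divr_ge0 ?mulr_ge0 ?exprn_ge0.
have small_side : 'C(k, d)%:R <= y * 'C(n - k, d)%:R.
  rewrite mulrAC ler_pdivlMr ?exprn_gt0 // -!natrX -!natrM ler_nat.
  by rewrite leq_bin_small_side //; lia.
have p_le : psplit R n d k <= expR y * q ^+ k.
  apply: (@le_trans _ _ ((1 + y) * ('C(n - k, d)%:R / 'C(n, d)%:R))).
    rewrite /psplit natrD mulrDl mulrDl mul1r addrC lerD2l mulrA.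
    by rewrite ler_wpM2r ?invr_ge0.
  apply: ler_pM; rewrite ?addr_ge0 ?divr_ge0 //; first exact: expR_ge1Dx.
  exact: bin_subn_ratio_le.
have q_le : q <= expR (- (d%:R / n%:R)).
  by apply: le_trans (expR_ge1Dx _); rewrite /q natrB // mulrBl divff ?gt_eqF.
apply: (le_trans (lerXn2r _ _ _ p_le)); rewrite ?nnegrE ?divr_ge0 ?mulr_ge0 ?expR_ge0 ?exprn_ge0 //.
rewrite exprMn -exprM mulnDr (exprD q) mulrCA -[leRHS]mulr1 ler_wpM2l ?exprn_ge0 // mulrC.
apply: (@le_trans _ _ (expR (- (d%:R / n%:R)) ^+ (k * (4 * k)) * expR y ^+ (n + 4 * k))).
  by rewrite ler_wpM2r ?exprn_ge0 ?expR_ge0 // lerXn2r ?nnegrE ?expR_ge0.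
rewrite -!expRM_natl -expRD expR_le1.
have -> : (k * (4 * k))%:R * - (d%:R / n%:R) + (n + 4 * k)%:R * y
    = y * ((n + 4 * k)%:R - d%:R * n%:R) :> R.
  by rewrite /y !natrM natrD; field; rewrite gt_eqF.
by rewrite mulr_ge0_le0 // subr_le0 -natrM ler_nat; nia.
Qed.

Lemma psplit_pow_le_d2 : d = 2%N -> (2 <= k)%N ->
  psplit R n d k ^+ (n + 4 * k) <= q ^+ (k * n).
Proof.
(* p_k = 1 - z exactly, while q = (n-2)/n >= exp (-2/(n-2)). *)
move=> d2 k2; rewrite /q; subst d.
set z : R := (k * (n - k))%:R / 'C(n, 2)%:R.
have p_eq : psplit R n 2 k = 1 - z.
  have split2 := @bin2_split n k k_le_n.
  rewrite /psplit /z -split2 !natrD; field.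
  by rewrite -natrM -!natrD split2 pnatr_eq0 -lt0n bin_gt0.
have z_le1 : 0 <= 1 - z by rewrite -p_eq divr_ge0.
rewrite p_eq; apply: (le_trans (lerXn2r _ _ _ (expR_ge1Dx (- z)))).
  by rewrite nnegrE.
  by rewrite nnegrE expR_ge0.
set x : R := 2 / (n - 2)%:R.
have n2_gt0 : 0 < (n - 2)%:R :> R by rewrite ltr0n; lia.
have q_ge : expR (- x) <= (n - 2)%:R / n%:R.
  rewrite expRN -[leRHS]invf_div lef_pV2 ?qualifE /= ?expR_gt0 ?divr_gt0 //.
  apply: le_trans (expR_ge1Dx _); rewrite /x.
  have -> : n%:R = (n - 2)%:R + 2 :> R by rewrite -natrD subnK //; lia.
  by rewrite mulrDl divff ?gt_eqF.
apply: (le_trans _ (lerXn2r _ _ _ q_ge)); rewrite ?nnegrE ?expR_ge0 ?divr_ge0 //.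
rewrite -!expRM_natl ler_expR !mulrN lerN2.
have c2 : 'C(n, 2)%:R * 2 = (n * (n - 1))%:R :> R by rewrite -bin2_mul2 natrM.
rewrite /x /z mulrA ler_pdivrMr // mulrAC mulrA ler_pdivlMr //.
by rewrite -[leLHS]mulrA [2 * _]mulrC c2 -!natrM ler_nat crossing_pairs_ineq.
Qed.

Lemma psplit_pow_le : (2 <= d)%N -> psplit R n d k ^+ (n + 4 * k) <= q ^+ (k * n).
Proof.
move=> d2; have [k_lt_d|d_le_k] := ltnP k d.
  have q_le1 : q <= 1 by rewrite ler_pdivrMr // mul1r ler_nat leq_subr.
  apply: (@le_trans _ _ (q ^+ (k * (n + 4 * k)))).
    rewrite exprM lerXn2r ?nnegrE ?exprn_ge0 ?divr_ge0 //.
    by rewrite /psplit bin_small // add0n bin_subn_ratio_le.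
  by rewrite ler_wiXn2l // leq_mul2l leq_addr orbT.
have [d3|d_eq2] : (3 <= d)%N \/ d = 2%N by lia.
  exact: psplit_pow_le_dge3.
by apply: psplit_pow_le_d2; rewrite // -d_eq2.
Qed.

End SplitProbability.

Definition tail_term (R : realType) (n m d r : nat) : R :=
  (expR 5 * n%:R * ((n - d)%:R / n%:R) ^+ m) ^+ r.

Lemma tail_term_ge0 (R : realType) n m d r : (d <= n)%N -> 0 <= tail_term R n m d r.
Proof. by move=> dn; rewrite exprn_ge0 ?mulr_ge0 ?expR_ge0 ?exprn_ge0 ?divr_ge0. Qed.

Lemma psplit_subn (R : numFieldType) n d s : (s <= n)%N ->
  psplit R n d (n - s) = psplit R n d s.
Proof. by move=> sn; rewrite /psplit subKn // addnC. Qed.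

Lemma union_term_le_half (R : realType) n m d k :
  (2 <= d)%N -> (d <= n)%N -> (0 < k)%N -> (2 * k <= n)%N ->
  'C(n, k)%:R * psplit R n d k ^+ m
    <= tail_term R n m d k / 2 + 'C(n, k)%:R * expR (- n%:R).
Proof.
move=> d2 dn k0 kn; apply: union_term_le_of_pow; rewrite ?exprn_ge0 ?divr_ge0 //.
rewrite -!exprM mulnC exprM [leRHS](_ : _ = (((n - d)%:R / n%:R) ^+ (k * n)) ^+ m).
  by rewrite lerXn2r ?nnegrE ?exprn_ge0 ?divr_ge0 ?psplit_pow_le.
by rewrite -!exprM; congr (_ ^+ _); lia.
Qed.

Lemma union_term_le (R : realType) n m d s :
  (2 <= d)%N -> (d <= n)%N -> (0 < s < n)%N ->
  'C(n, s)%:R * psplit R n d s ^+ m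
    <= tail_term R n m d s / 2 + tail_term R n m d (n - s) / 2
       + 'C(n, s)%:R * expR (- n%:R).
Proof.
move=> d2 dn /andP[s0 sn]; have [small|large] := leqP (2 * s) n.
  apply: (le_trans (@union_term_le_half R n m d s d2 dn s0 small)).
  by rewrite lerD2r lerDl divr_ge0 ?tail_term_ge0.
rewrite -(@psplit_subn _ n d s (ltnW sn)) -bin_sub ?(ltnW sn) //.
apply: (le_trans (@union_term_le_half R n m d (n - s) d2 dn _ _)); try lia.
by rewrite lerD2r lerDr divr_ge0 ?tail_term_ge0.
Qed.

Lemma expeR_hlambda_tail (R : realType) n m d r :
  (0 < d)%N -> (d <= n)%N -> (1 <= m)%N -> (1 <= r)%N ->
  (expeR ((hlambda R n m d + 5%:E) * (r%:R : R)%:E) = (tail_term R n m d r)%:E)%E.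
Proof.
move=> d0 dn m1 r1.
have n_gt0 : 0 < n%:R :> R by rewrite ltr0n; lia.
rewrite /hlambda /tail_term.
have -> : 1 - d%:R / n%:R = (n - d)%:R / n%:R :> R.
  by rewrite natrB // mulrBl divff ?gt_eqF.
have [d_lt_n|d_ge_n] := ltnP d n.
  have q_gt0 : 0 < (n - d)%:R / n%:R :> R by rewrite divr_gt0 // ltr0n subn_gt0.
  rewrite !lne_EFin //= expRM_natr !expRD lnK ?posrE // expRM_natl lnK ?posrE //.
  by congr (_ %:E); congr (_ ^+ _); ring.
(* d = n: lambda = -oo (this uses m >= 1) and the term q^m vanishes. *)
have -> : n = d by lia.
rewrite subnn mul0r (le0_lneNy (lexx _)) gt0_muleNy ?lte_fin ?ltr0n // addeNy addNye.
rewrite gt0_mulNye ?lte_fin ?ltr0n //= expr0n /=; case: m m1 => // m _.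
by rewrite mulr0 expr0n; case: r r1.
Qed.

Lemma prob_disconnected_le_union (R : realType) n m d : (0 < d)%N -> (d <= n)%N ->
  prob_disconnected R n m d <=
    \sum_(s < n.+1 | (0 < s < n)%N) 'C(n, s)%:R * psplit R n d s ^+ m.
Proof.
move=> d0 dn; have c_gt0 : (0 < 'C(n, d))%N by rewrite bin_gt0.
rewrite /prob_disconnected card_hsample ler_pdivrMr ?ltr0n ?expn_gt0 ?c_gt0 //.
apply: (@le_trans _ _ (\sum_(V : {set 'I_n} | (0 < #|V| < n)%N)
                         (('C(#|V|, d) + 'C(n - #|V|, d)) ^ m)%:R)).
  rewrite -natr_sum ler_nat (leq_trans (card_disconnected_le n m d)) //.
  by apply: leq_sum => V _; apply: card_uncrossed.
have := @sum_set_by_card R 'I_n (fun s => (0 < s < n)%N) (fun s => psplit R n d s ^+ m).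
rewrite card_ord => <-; rewrite mulr_suml; apply: ler_sum => V _.
by rewrite /psplit expr_div_n !natrX divfK // expf_neq0 // pnatr_eq0 -lt0n.
Qed.

Lemma sum_inner_subn (R : nmodType) n (g : nat -> R) :
  \sum_(s < n.+1 | (0 < s < n)%N) g (n - s)%N = \sum_(s < n.+1 | (0 < s < n)%N) g s.
Proof.
rewrite (reindex_inj rev_ord_inj) /=; apply: eq_big => s.
  by rewrite subSS; have := ltn_ord s; lia.
by move=> _; rewrite subSS subKn // -ltnS.
Qed.

Lemma prob_disconnected_le_tail (R : realType) n m d : (2 <= d)%N -> (d <= n)%N ->
  prob_disconnected R n m d
    <= \sum_(1 <= s < n.+1) tail_term R n m d s + (2 / expR 1) ^+ n.
Proof.
move=> d2 dn; apply: (le_trans (@prob_disconnected_le_union R n m d _ dn)); first by lia.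
apply: (@le_trans _ _ (\sum_(s < n.+1 | (0 < s < n)%N)
   (tail_term R n m d s / 2 + tail_term R n m d (n - s) / 2 + 'C(n, s)%:R * expR (- n%:R)))).
  by apply: ler_sum => s Ps; exact: union_term_le.
rewrite !big_split /= -!mulr_suml sum_inner_subn -splitr lerD //.
  rewrite big_mkcond big_ord_recl /= add0r big_add1 big_mkord; apply: ler_sum => s _.
  by case: ifP => _; rewrite ?tail_term_ge0.
have sum_bin : \sum_(s < n.+1) 'C(n, s)%:R = 2 ^+ n :> R.
  by rewrite -[2]/(1 + 1 : R) exprDn; apply: eq_bigr => s _; rewrite !expr1n mul1r.
rewrite expr_div_n expRN -expRM_natl mulr1 -sum_bin ler_wpM2r ?expR_ge0 //.
by rewrite [leLHS]big_mkcond; apply: ler_sum => s _; case: ifP.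
Qed.

Local Close Scope ring_scope.

Theorem mainTheorem13 (R : realType) (n m d : nat)
  (h2d : (2 <= d)%N) (hdn : (d <= n)%N) (hm : (1 <= m)%N) :
  ((prob_disconnected R n m d)%:E <=
     expeR (hlambda R n m d)
     + (\sum_(1 <= r <oo) expeR ((hlambda R n m d + 5%:E) * (r%:R : R)%:E))
     + ((2 / expR (1 : R)) ^+ n)%:E)%E.
Proof.
have tail_sum : (\sum_(1 <= s < n.+1) (tail_term R n m d s)%:E
    <= \sum_(1 <= r <oo) expeR ((hlambda R n m d + 5%:E) * (r%:R : R)%:E))%E.
  have -> : (\sum_(1 <= s < n.+1) (tail_term R n m d s)%:E
      = \sum_(1 <= r < n.+1) expeR ((hlambda R n m d + 5%:E) * (r%:R : R)%:E))%E.
    by apply: eq_big_nat => r /andP[r1 _]; rewrite expeR_hlambda_tail //; lia.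
  by apply: nneseries_lim_ge => r _ _; exact: expeR_ge0.
apply: (@le_trans _ _ ((\sum_(1 <= s < n.+1) tail_term R n m d s)%R%:E
                       + ((2 / expR 1) ^+ n)%R%:E)%E).
  by rewrite -EFinD lee_fin prob_disconnected_le_tail.
rewrite leeD2r // -sumEFin -[X in (X <= _)%E]add0e leeD //; exact: expeR_ge0.
Qed.
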